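(* Let $\Phi$ be a Følner sequence in $\mathbb{N}$ and let $j\mapsto f_j$ be a sequence in $L^2(\mathbb{N},\Phi)$ that is Cauchy with respect to $\|\cdot\|_\Phi$. Then there exist a subsequence $\Psi$ of $\Phi$ and $f\in L^2(\mathbb{N},\Psi)$ such that $\|f-f_j\|_\Psi\to0$ as $j\to\infty$. Moreover, if all the $f_j$ take values in an interval $[a,b]$, then so does $f$.
   Context: A Følner sequence in $\mathbb{N}$ is a sequence $\Phi\colon N\mapsto\Phi_N$ of finite non-empty subsets of $\mathbb{N}$ with $|(\Phi_N+m)\triangle\Phi_N|/|\Phi_N|\to0$ for all $m\in\mathbb{N}$. The Besicovitch seminorm is $\|f\|_\Phi=\big(\limsup_{N\to\infty}\frac{1}{|\Phi_N|}\sum_{n\in\Phi_N}|f(n)|^2\big)^{1/2}$ and $L^2(\mathbb{N},\Phi)=\{f\colon\mathbb{N}\to\mathbb{C}:\|f\|_\Phi<\infty\}$. A sequence $(f_j)$ is Cauchy with respect to $\|\cdot\|_\Phi$ if for every $\epsilon>0$ there is $N$ with $\|f_k-f_j\|_\Phi\le\epsilon$ for all $j,k\ge N$. *)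

From Stdlib Require Import Reals Lra List Arith.
From Coquelicot Require Import Coquelicot.
Open Scope R_scope.

(* Finite sets of naturals are represented by duplicate-free lists. *)
Definition memb (x : nat) (A : list nat) : bool := existsb (Nat.eqb x) A.

Definition shift_set (A : list nat) (m : nat) : list nat := map (fun x => (x + m)%nat) A.

Definition symdiff_card (A B : list nat) : nat :=
  (length (filter (fun x => negb (memb x B)) A) +
   length (filter (fun y => negb (memb y A)) B))%nat.

Definition finset_ok (A : list nat) : Prop := NoDup A /\ A <> nil.

Definition Folner (Phi : nat -> list nat) : Prop :=
  (forall N, finset_ok (Phi N)) /\
  forall m : nat,
    is_lim_seq (fun N => INR (symdiff_card (shift_set (Phi N) m) (Phi N))
                         / INR (length (Phi N))) 0.

Definition sum_list (s : list nat) (g : nat -> R) : R :=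
  fold_right (fun n acc => g n + acc) 0 s.

Definition bes_avg (Phi : nat -> list nat) (f : nat -> C) (N : nat) : R :=
  sum_list (Phi N) (fun n => (Cmod (f n))^2) / INR (length (Phi N)).

Definition besnorm (Phi : nat -> list nat) (f : nat -> C) : Rbar :=
  match LimSup_seq (bes_avg Phi f) with
  | Finite x => Finite (sqrt x)
  | p_infty => p_infty
  | m_infty => m_infty
  end.

Definition L2 (Phi : nat -> list nat) (f : nat -> C) : Prop :=
  Rbar_lt (besnorm Phi f) p_infty.

Definition fsub (f g : nat -> C) : nat -> C := fun n => Cminus (f n) (g n).

Definition Cauchy_bes (Phi : nat -> list nat) (fs : nat -> nat -> C) : Prop :=
  forall eps : R, 0 < eps -> exists N : nat, forall j k : nat,
    (N <= j)%nat -> (N <= k)%nat -> Rbar_le (besnorm Phi (fsub (fs k) (fs j))) eps.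

(* strictly increasing index map: Phi \o sigma is a subsequence of Phi *)
Definition strict_incr (sigma : nat -> nat) : Prop :=
  forall i j : nat, (i < j)%nat -> (sigma i < sigma j)%nat.

Definition in_interval (a b : R) (z : C) : Prop :=
  Im z = 0 /\ a <= Re z <= b.

From Stdlib Require Import Reals Lra Lia List Classical ClassicalEpsilon Wf_nat.
From Coquelicot Require Import Coquelicot.
Open Scope R_scope.

(* The limit is built by a diagonal argument along windows [Phi (sigma k)]
   chosen one at a time: on each point, [f] agrees with [fs k] for the first
   stage [k] whose window contains the point.  At stage [k] the window is taken
   so large that the points of the earlier windows, where [f] may differ from
   [fs k], contribute at most [1/(k+1)] to the average, and so far out that the
   average of [|fs k - fs j|^2] over it is at most twice the square of the
   Cauchy bound for [fs k - fs j].  Hence the average of [|f - fs j|^2] over the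
   [k]-th window is small once [j] and [k >= j] are large.  The Følner property
   enters only through [|Phi N| -> oo].  Since every value of [f] is a value of
   some [fs k], the interval constraint passes to [f]. *)

Lemma eventually_forall_le (K : nat) (P : nat -> nat -> Prop) :
  (forall m, (m <= K)%nat -> eventually (P m)) ->
  eventually (fun N => forall m, (m <= K)%nat -> P m N).
Proof.
  induction K as [|K IH]; intros HP.
  - apply (filter_imp (P 0%nat)); [|apply HP; lia].
    intros N HN m Hm. replace m with 0%nat by lia. exact HN.
  - apply (filter_imp (fun N => (forall m, (m <= K)%nat -> P m N) /\ P (S K) N)).
    + intros N [Hlow Htop] m Hm.
      destruct (Nat.eq_dec m (S K)) as [->|Hne]; [exact Htop|apply Hlow; lia].
    + apply filter_and; [apply IH; intros m Hm; apply HP; lia|apply HP; lia].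
Qed.

Lemma eventually_impl (A : Prop) (P : nat -> Prop) :
  (A -> eventually P) -> eventually (fun N => A -> P N).
Proof.
  intros HP. destruct (classic A) as [HA|HnA].
  - apply (filter_imp P); auto.
  - apply filter_forall. intros N HA; contradiction.
Qed.

Lemma eventually_inv_succ_le (x : R) :
  0 < x -> eventually (fun m => / (INR m + 1) <= x).
Proof.
  intros Hx. destruct (INR_unbounded (/ x)) as [m0 Hm0]. exists m0. intros m Hm.
  apply le_INR in Hm. rewrite <- (Rinv_inv x).
  apply Rinv_le_contravar; [apply Rinv_0_lt_compat|]; lra.
Qed.

Lemma is_LimSup_seq_LimSup (u : nat -> R) : is_LimSup_seq u (LimSup_seq u).
Proof.
  destruct (ex_LimSup_seq u) as [l Hl].
  rewrite (is_LimSup_seq_unique _ _ Hl). exact Hl.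
Qed.

Lemma besnorm_le_eventually (Phi : nat -> list nat) (g : nat -> C) (e d : R) :
  0 < d -> Rbar_le (besnorm Phi g) e ->
  eventually (fun N => bes_avg Phi g N < e ^ 2 + d).
Proof.
  intros Hd. unfold besnorm.
  pose proof (is_LimSup_seq_LimSup (bes_avg Phi g)) as Hl.
  destruct (LimSup_seq (bes_avg Phi g)) as [r| |]; simpl in Hl |- *; intros He.
  - destruct (Hl (mkposreal d Hd)) as [_ [N HN]]. exists N. intros n Hn.
    specialize (HN n Hn). simpl in HN.
    assert (r <= e ^ 2).
    { destruct (Rle_or_lt 0 r) as [Hr|Hr]; [|nra].
      pose proof (sqrt_sqrt r Hr). pose proof (sqrt_pos r). nra. }
    lra.
  - contradiction.
  - apply Hl.
Qed.

Lemma L2_eventually_bounded (Phi : nat -> list nat) (g : nat -> C) :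
  L2 Phi g -> exists M, eventually (fun N => bes_avg Phi g N < M).
Proof.
  unfold L2, besnorm.
  pose proof (is_LimSup_seq_LimSup (bes_avg Phi g)) as Hl.
  destruct (LimSup_seq (bes_avg Phi g)) as [r| |]; simpl in Hl |- *; intros H.
  - exists (r + 1). destruct (Hl (mkposreal 1 Rlt_0_1)) as [_ [N HN]].
    exists N. apply HN.
  - contradiction.
  - exists 0. apply Hl.
Qed.

Lemma besnorm_le_of_eventually (Phi : nat -> list nat) (g : nat -> C) (c : R) :
  0 <= c -> eventually (fun N => bes_avg Phi g N <= c ^ 2) ->
  Rbar_le (besnorm Phi g) c.
Proof.
  intros Hc [N0 HN0]. unfold besnorm.
  pose proof (is_LimSup_seq_LimSup (bes_avg Phi g)) as Hl.
  destruct (LimSup_seq (bes_avg Phi g)) as [r| |]; simpl in Hl |- *.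
  - rewrite <- (sqrt_pow2 c Hc). apply sqrt_le_1_alt.
    destruct (Rle_or_lt r (c ^ 2)) as [Hr|Hr]; [exact Hr|].
    assert (Hgap : 0 < (r - c ^ 2) / 2) by lra.
    destruct (proj1 (Hl (mkposreal _ Hgap)) N0) as [n [Hn Hrn]]. simpl in Hrn.
    specialize (HN0 n Hn). lra.
  - destruct (Hl (c ^ 2) N0) as [n [Hn Hcn]]. specialize (HN0 n Hn). lra.
  - exact I.
Qed.

Lemma L2_of_eventually_bounded (Phi : nat -> list nat) (g : nat -> C) (M : R) :
  eventually (fun N => bes_avg Phi g N <= M) -> L2 Phi g.
Proof.
  intros [N0 HN0]. unfold L2, besnorm.
  pose proof (is_LimSup_seq_LimSup (bes_avg Phi g)) as Hl.
  destruct (LimSup_seq (bes_avg Phi g)) as [r| |]; simpl in Hl |- *; auto.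
  destruct (Hl M N0) as [n [Hn HMn]]. specialize (HN0 n Hn). lra.
Qed.

Lemma L2_subseq (Phi : nat -> list nat) (sigma : nat -> nat) (g : nat -> C) :
  strict_incr sigma -> L2 Phi g -> L2 (fun N => Phi (sigma N)) g.
Proof.
  intros Hs Hg. destruct (L2_eventually_bounded Phi g Hg) as [M HM].
  apply (L2_of_eventually_bounded _ _ M).
  apply (filter_imp (fun k => bes_avg Phi g (sigma k) < M)); [intros k Hk; apply Rlt_le, Hk|].
  exact (eventually_subseq sigma (fun n => Hs n (S n) (Nat.lt_succ_diag_r n)) _ HM).
Qed.

Lemma sum_list_le (A : list nat) (g1 g2 : nat -> R) :
  (forall n, In n A -> g1 n <= g2 n) -> sum_list A g1 <= sum_list A g2.
Proof.
  induction A as [|a A IH]; simpl; intros H; [lra|].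
  pose proof (H a (or_introl eq_refl)).
  assert (sum_list A g1 <= sum_list A g2) by auto. lra.
Qed.

Lemma sum_list_plus (A : list nat) (g1 g2 : nat -> R) :
  sum_list A (fun n => g1 n + g2 n) = sum_list A g1 + sum_list A g2.
Proof. induction A as [|a A IH]; simpl; [lra|]. rewrite IH; lra. Qed.

Lemma sum_list_scal (A : list nat) (c : R) (g : nat -> R) :
  sum_list A (fun n => c * g n) = c * sum_list A g.
Proof. induction A as [|a A IH]; simpl; [lra|]. rewrite IH; lra. Qed.

Lemma sum_list_nonneg (A : list nat) (g : nat -> R) :
  (forall n, 0 <= g n) -> 0 <= sum_list A g.
Proof. intros H; induction A as [|a A IH]; simpl; [lra|]. specialize (H a); lra. Qed.

Lemma sum_list_elem (A : list nat) (g : nat -> R) (a : nat) :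
  (forall n, 0 <= g n) -> In a A -> g a <= sum_list A g.
Proof.
  intros H; induction A as [|b A IH]; simpl; [tauto|]. intros [->|Ha].
  - pose proof (sum_list_nonneg A g H); lra.
  - pose proof (H b); specialize (IH Ha); lra.
Qed.

Lemma sum_list_filter (A : list nat) (p : nat -> bool) (g : nat -> R) :
  sum_list A (fun n => if p n then g n else 0) = sum_list (filter p A) g.
Proof. induction A as [|a A IH]; simpl; [lra|]. destruct (p a); simpl; rewrite IH; lra. Qed.

Lemma sum_list_remove (W : list nat) (g : nat -> R) (a : nat) :
  (forall n, 0 <= g n) -> In a W ->
  g a + sum_list (remove Nat.eq_dec a W) g <= sum_list W g.
Proof.
  intros Hg; induction W as [|b W IH]; simpl; [tauto|]. intros Ha.
  destruct (Nat.eq_dec a b) as [<-|Hne]; simpl.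
  - destruct (in_dec Nat.eq_dec a W) as [HaW|HaW].
    + specialize (IH HaW). pose proof (Hg a). lra.
    + rewrite notin_remove by exact HaW. lra.
  - destruct Ha as [->|Ha]; [congruence|]. specialize (IH Ha). lra.
Qed.

Lemma sum_list_incl (A W : list nat) (g : nat -> R) :
  NoDup A -> incl A W -> (forall n, 0 <= g n) -> sum_list A g <= sum_list W g.
Proof.
  intros HA; revert W; induction HA as [|a A HaA HA IH]; intros W HAW Hg; simpl.
  - apply sum_list_nonneg, Hg.
  - assert (HAW' : incl A (remove Nat.eq_dec a W)).
    { intros x Hx. apply in_in_remove; [intros ->; contradiction|apply HAW; right; exact Hx]. }
    pose proof (IH _ HAW' Hg).
    pose proof (sum_list_remove W g a Hg (HAW a (or_introl eq_refl))). lra.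
Qed.

Lemma memb_In (x : nat) (A : list nat) : memb x A = true <-> In x A.
Proof.
  unfold memb; rewrite existsb_exists; split.
  - intros [y [Hy E]]; apply Nat.eqb_eq in E; subst; exact Hy.
  - intros H; exists x; split; [exact H|apply Nat.eqb_refl].
Qed.

Lemma sum_list_indicator_le (A W : list nat) (g : nat -> R) :
  NoDup A -> (forall n, 0 <= g n) ->
  sum_list A (fun n => if memb n W then g n else 0) <= sum_list W g.
Proof.
  intros HA Hg. rewrite sum_list_filter.
  apply sum_list_incl; [apply NoDup_filter, HA| |exact Hg].
  intros x Hx. apply filter_In in Hx. apply memb_In, Hx.
Qed.

Lemma Rdiv_INR_le_compat (a b : R) (n : nat) : a <= b -> a / INR n <= b / INR n.
Proof.
  intros Hab. destruct n as [|n].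
  - simpl INR. rewrite !Rdiv_0_r; lra.
  - apply Rmult_le_compat_r; [apply Rlt_le, Rinv_0_lt_compat, lt_0_INR; lia|exact Hab].
Qed.

Lemma Cmod_sq_split (a b : C) : Cmod a ^ 2 <= 2 * Cmod (Cminus a b) ^ 2 + 2 * Cmod b ^ 2.
Proof.
  assert (Ha : a = (Cminus a b + b)%C) by (unfold Cminus; ring).
  pose proof (Cmod_triangle (Cminus a b) b) as Htri. rewrite <- Ha in Htri.
  pose proof (Cmod_ge_0 a). pose proof (Cmod_ge_0 b). pose proof (Cmod_ge_0 (Cminus a b)).
  pose proof (pow2_ge_0 (Cmod (Cminus a b) - Cmod b)).
  assert (Cmod a ^ 2 <= (Cmod (Cminus a b) + Cmod b) ^ 2) by (apply pow_incr; lra).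
  nra.
Qed.

Lemma bes_avg_split (Phi : nat -> list nat) (f g : nat -> C) (N : nat) :
  bes_avg Phi f N <= 2 * bes_avg Phi (fsub f g) N + 2 * bes_avg Phi g N.
Proof.
  unfold bes_avg. rewrite !Rmult_div_assoc, <- Rdiv_plus_distr.
  apply Rdiv_INR_le_compat. rewrite <- !sum_list_scal, <- sum_list_plus.
  apply sum_list_le. intros n _. apply Cmod_sq_split.
Qed.

Lemma L2_of_fsub (Phi : nat -> list nat) (f g : nat -> C) :
  L2 Phi g -> L2 Phi (fsub f g) -> L2 Phi f.
Proof.
  intros Hg Hfg.
  destruct (L2_eventually_bounded _ _ Hg) as [Mg HMg].
  destruct (L2_eventually_bounded _ _ Hfg) as [Mfg HMfg].
  apply (L2_of_eventually_bounded _ _ (2 * Mfg + 2 * Mg)).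
  apply (filter_imp (fun N => bes_avg Phi (fsub f g) N < Mfg /\ bes_avg Phi g N < Mg)).
  - intros N [Hfg' Hg']. pose proof (bes_avg_split Phi f g N). lra.
  - apply filter_and; assumption.
Qed.

Lemma In_le_list_max (l : list nat) (x : nat) : In x l -> (x <= list_max l)%nat.
Proof.
  intros Hx. pose proof (proj1 (list_max_le l (list_max l)) (le_n _)) as Hall.
  rewrite Forall_forall in Hall. exact (Hall x Hx).
Qed.

(* If [A + 1] were contained in [A], then [A] would contain [x + n] for every [n]. *)
Lemma symdiff_card_shift1_pos (A : list nat) :
  A <> nil -> (1 <= symdiff_card (shift_set A 1) A)%nat.
Proof.
  intros HA. unfold symdiff_card.
  destruct (filter (fun x => negb (memb x A)) (shift_set A 1)) as [|y l] eqn:E;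
    [|simpl; lia].
  exfalso. destruct A as [|x0 A']; [congruence|]. set (A := x0 :: A') in *.
  assert (Hstep : forall x, In x A -> In (x + 1)%nat A).
  { intros x Hx. apply memb_In. destruct (memb (x + 1) A) eqn:Em; [reflexivity|].
    assert (Hin : In (x + 1)%nat (filter (fun x => negb (memb x A)) (shift_set A 1))).
    { apply filter_In. split; [apply (in_map (fun x => (x + 1)%nat)), Hx|rewrite Em; reflexivity]. }
    rewrite E in Hin. contradiction. }
  assert (Hiter : forall n, In (x0 + n)%nat A).
  { induction n as [|n IH]; [rewrite Nat.add_0_r; left; reflexivity|].
    replace (x0 + S n)%nat with (x0 + n + 1)%nat by lia. apply Hstep, IH. }
  pose proof (In_le_list_max A _ (Hiter (S (list_max A)))). lia.
Qed.

Lemma Folner_length_unbounded (Phi : nat -> list nat) :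
  Folner Phi -> forall c, eventually (fun N => c <= INR (length (Phi N))).
Proof.
  intros [Hok Hlim] c. specialize (Hlim 1%nat). apply is_lim_seq_spec in Hlim.
  set (c' := Rmax c 0 + 1).
  assert (Hc' : 0 < c') by (pose proof (Rmax_r c 0); unfold c'; lra).
  refine (filter_imp _ _ _ (Hlim (mkposreal _ (Rinv_0_lt_compat _ Hc')))).
  intros N HN. simpl in HN. rewrite Rminus_0_r in HN.
  destruct (Hok N) as [_ Hne].
  assert (HL : 0 < INR (length (Phi N)))
    by (apply lt_0_INR; destruct (Phi N); [congruence|simpl; lia]).
  pose proof (le_INR _ _ (symdiff_card_shift1_pos _ Hne)) as HS.
  set (L := INR (length (Phi N))) in *.
  set (S := INR (symdiff_card (shift_set (Phi N) 1) (Phi N))) in *. simpl in HS.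
  assert (HSL : / L <= S / L).
  { rewrite <- (Rmult_1_l (/ L)). apply Rmult_le_compat_r; [apply Rlt_le, Rinv_0_lt_compat|]; lra. }
  rewrite Rabs_pos_eq in HN by (apply Rdiv_le_0_compat; lra).
  assert (c' < L) by (apply Rinv_lt_cancel; lra).
  pose proof (Rmax_l c 0). unfold c' in *. lra.
Qed.

Fixpoint history (pick : list nat -> nat) (k : nat) : list nat :=
  match k with
  | O => nil
  | S k => history pick k ++ pick (history pick k) :: nil
  end.

Lemma history_eq (pick : list nat -> nat) (k : nat) :
  history pick k = map (fun i => pick (history pick i)) (seq 0 k).
Proof.
  induction k as [|k IH]; [reflexivity|].
  rewrite seq_S, map_app, <- IH. reflexivity.
Qed.

Lemma strict_incr_choice (P : list nat -> nat -> Prop) :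
  (forall h, eventually (P h)) ->
  exists sigma, strict_incr sigma /\ forall k, P (map sigma (seq 0 k)) (sigma k).
Proof.
  intros HP.
  destruct (choice (fun h N => P h N /\ forall x, In x h -> (x < N)%nat)) as [pick Hpick].
  { intros h. destruct (HP h) as [N0 HN0]. exists (max N0 (S (list_max h))).
    split; [apply HN0; lia|]. intros x Hx. pose proof (In_le_list_max h x Hx). lia. }
  set (sigma k := pick (history pick k)).
  assert (Hhist : forall k, history pick k = map sigma (seq 0 k)) by apply history_eq.
  exists sigma. split.
  - intros i k Hik. apply (proj2 (Hpick (history pick k))).
    rewrite Hhist. apply in_map, in_seq. lia.
  - intros k. rewrite <- Hhist. apply Hpick.
Qed.

Definition least_witness (P : nat -> Prop) : nat :=
  epsilon (inhabits 0%nat) (fun k => P k /\ forall i, (i < k)%nat -> ~ P i).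

Lemma least_witness_spec (P : nat -> Prop) (k : nat) :
  P k -> P (least_witness P) /\ (least_witness P <= k)%nat.
Proof.
  intros Hk.
  assert (Hleast : P (least_witness P) /\ forall i, (i < least_witness P)%nat -> ~ P i).
  { unfold least_witness. apply epsilon_spec.
    destruct (dec_inh_nat_subset_has_unique_least_element P (fun n => classic (P n)))
      as [k0 [[Hk0 Hmin] _]]; [exists k; exact Hk|].
    exists k0. split; [exact Hk0|]. intros i Hi HPi. specialize (Hmin i HPi). lia. }
  split; [apply Hleast|]. apply Nat.nlt_ge. intros Hlt. exact (proj2 Hleast k Hlt Hk).
Qed.

Section DiagonalLimit.

Variables (Phi : nat -> list nat) (fs : nat -> nat -> C).

Definition spread (k n : nat) : R :=
  sum_list (seq 0 (S k)) (fun i =>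
    sum_list (seq 0 (S k)) (fun j => Cmod (Cminus (fs i n) (fs j n)) ^ 2)).

Lemma spread_nonneg (k n : nat) : 0 <= spread k n.
Proof.
  apply sum_list_nonneg. intros i. apply sum_list_nonneg. intros j. apply pow2_ge_0.
Qed.

Lemma spread_ge (i j k n : nat) :
  (i <= k)%nat -> (j <= k)%nat -> Cmod (Cminus (fs i n) (fs j n)) ^ 2 <= spread k n.
Proof.
  intros Hi Hj. unfold spread.
  eapply Rle_trans; [|apply (sum_list_elem _ _ i)].
  - apply (sum_list_elem _ (fun j => Cmod (Cminus (fs i n) (fs j n)) ^ 2));
      [intros; apply pow2_ge_0|apply in_seq; lia].
  - intros i'. apply sum_list_nonneg. intros; apply pow2_ge_0.
  - apply in_seq; lia.
Qed.

(* [h] lists the indices [sigma 0, ..., sigma (k-1)] chosen before stage [k].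
   The first clause makes the points of the earlier windows, where the limit
   may differ from [fs k], negligible in [Phi N]; the second transfers each
   Cauchy bound [1/(m+1)] from the seminorm to the single average at [N]. *)
Definition admissible (h : list nat) (N : nat) : Prop :=
  let k := length h in
  (INR k + 1) * sum_list (flat_map Phi h) (spread k) < INR (length (Phi N)) /\
  forall m, (m <= k)%nat -> forall j, (j <= k)%nat ->
    Rbar_le (besnorm Phi (fsub (fs k) (fs j))) (/ (INR m + 1)) ->
    bes_avg Phi (fsub (fs k) (fs j)) N < 2 * (/ (INR m + 1)) ^ 2.

Hypothesis Phi_large : forall c, eventually (fun N => c <= INR (length (Phi N))).

Lemma admissible_eventually (h : list nat) : eventually (admissible h).
Proof.
  unfold admissible. cbv zeta. set (k := length h). apply filter_and.
  - set (D := (INR k + 1) * sum_list (flat_map Phi h) (spread k)).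
    apply (filter_imp (fun N => D + 1 <= INR (length (Phi N)))); [intros N HN; lra|].
    apply Phi_large.
  - apply eventually_forall_le. intros m Hm.
    apply eventually_forall_le. intros j Hj.
    apply eventually_impl. intros Hnorm.
    set (delta := / (INR m + 1)) in *.
    assert (Hdelta : 0 < delta ^ 2)
      by (apply pow_lt, Rinv_0_lt_compat; pose proof (pos_INR m); lra).
    apply (filter_imp (fun N => bes_avg Phi (fsub (fs k) (fs j)) N < delta ^ 2 + delta ^ 2));
      [intros N HN; lra|].
    exact (besnorm_le_eventually _ _ _ _ Hdelta Hnorm).
Qed.

Hypothesis Phi_NoDup : forall N, NoDup (Phi N).

Variable sigma : nat -> nat.

Hypothesis sigma_admissible : forall k, admissible (map sigma (seq 0 k)) (sigma k).

Definition first_visit (n : nat) : nat := least_witness (fun k => In n (Phi (sigma k))).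

(* Off the union of the windows [first_visit] is a junk value; any choice would do. *)
Definition diagonal_limit (n : nat) : C := fs (first_visit n) n.

Lemma diagonal_limit_sq_le (j k n : nat) :
  (j <= k)%nat -> In n (Phi (sigma k)) ->
  Cmod (fsub diagonal_limit (fs j) n) ^ 2 <=
  Cmod (fsub (fs k) (fs j) n) ^ 2 +
  (if memb n (flat_map Phi (map sigma (seq 0 k))) then spread k n else 0).
Proof.
  intros Hjk Hn.
  destruct (least_witness_spec (fun k => In n (Phi (sigma k))) k Hn) as [Hfirst Hle].
  fold (first_visit n) in Hfirst, Hle. unfold fsub, diagonal_limit.
  destruct (Nat.eq_dec (first_visit n) k) as [->|Hne].
  - pose proof (spread_nonneg k n). destruct memb; lra.
  - replace (memb n _) with true.
    + pose proof (spread_ge (first_visit n) j k n Hle Hjk).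
      pose proof (pow2_ge_0 (Cmod (Cminus (fs k n) (fs j n)))). lra.
    + symmetry. apply memb_In, in_flat_map. exists (sigma (first_visit n)).
      split; [apply in_map, in_seq; lia|exact Hfirst].
Qed.

Lemma diagonal_limit_avg_le (j k : nat) : (j <= k)%nat ->
  bes_avg (fun N => Phi (sigma N)) (fsub diagonal_limit (fs j)) k <=
  bes_avg Phi (fsub (fs k) (fs j)) (sigma k) + / (INR k + 1).
Proof.
  intros Hjk. destruct (sigma_admissible k) as [Hsmall _]. simpl in Hsmall.
  rewrite length_map, length_seq in Hsmall.
  set (W := flat_map Phi (map sigma (seq 0 k))) in *.
  set (D := sum_list W (spread k)) in *.
  set (A := Phi (sigma k)).
  assert (HD : 0 <= D) by apply sum_list_nonneg, spread_nonneg.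
  assert (Hsum : sum_list A (fun n => Cmod (fsub diagonal_limit (fs j) n) ^ 2) <=
                 sum_list A (fun n => Cmod (fsub (fs k) (fs j) n) ^ 2) + D).
  { eapply Rle_trans; [apply sum_list_le; intros n Hn; exact (diagonal_limit_sq_le j k n Hjk Hn)|].
    rewrite sum_list_plus.
    pose proof (sum_list_indicator_le A W (spread k) (Phi_NoDup _) (spread_nonneg k)) as Hold.
    fold W D in Hold |- *. lra. }
  unfold bes_avg. fold A in Hsmall |- *. set (L := INR (length A)) in *.
  assert (Hk : 0 < INR k + 1) by (pose proof (pos_INR k); lra).
  assert (HL : 0 < L) by nra.
  assert (HDL : D / L <= / (INR k + 1)).
  { apply (Rmult_le_reg_r (L * (INR k + 1))); [nra|].
    replace (D / L * (L * (INR k + 1))) with ((INR k + 1) * D) by (field; lra).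
    replace (/ (INR k + 1) * (L * (INR k + 1))) with L by (field; lra). lra. }
  eapply Rle_trans; [apply Rmult_le_compat_r; [apply Rlt_le, Rinv_0_lt_compat, HL|exact Hsum]|].
  rewrite Rmult_plus_distr_r. unfold Rdiv in HDL |- *. lra.
Qed.

Lemma diagonal_limit_converges : Cauchy_bes Phi fs ->
  forall eps, 0 < eps -> exists J, forall j, (J <= j)%nat ->
    Rbar_le (besnorm (fun N => Phi (sigma N)) (fsub diagonal_limit (fs j))) eps.
Proof.
  intros HC eps Heps.
  destruct (eventually_inv_succ_le (eps / 2) ltac:(lra)) as [m Hm].
  specialize (Hm m (le_n _)). set (delta := / (INR m + 1)) in *.
  assert (Hdelta : 0 < delta) by (apply Rinv_0_lt_compat; pose proof (pos_INR m); lra).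
  assert (Hdelta2 : 2 * delta ^ 2 <= eps ^ 2 / 2) by nra.
  destruct (HC delta Hdelta) as [J HJ]. exists J. intros j Hj.
  apply besnorm_le_of_eventually; [lra|].
  destruct (eventually_inv_succ_le (eps ^ 2 / 2) ltac:(nra)) as [K HK].
  exists (max K (max m j)). intros k Hk.
  destruct (sigma_admissible k) as [_ Hclose]. simpl in Hclose.
  rewrite length_map, length_seq in Hclose.
  specialize (Hclose m ltac:(lia) j ltac:(lia) (HJ j k Hj ltac:(lia))).
  pose proof (diagonal_limit_avg_le j k ltac:(lia)).
  specialize (HK k ltac:(lia)). fold delta in Hclose. lra.
Qed.

Hypothesis sigma_incr : strict_incr sigma.

Lemma diagonal_limit_L2 : (forall j, L2 Phi (fs j)) -> Cauchy_bes Phi fs ->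
  L2 (fun N => Phi (sigma N)) diagonal_limit.
Proof.
  intros HL2 HC. destruct (diagonal_limit_converges HC 1 Rlt_0_1) as [J HJ].
  apply (L2_of_fsub _ _ (fs J)).
  - apply L2_subseq; [exact sigma_incr|apply HL2].
  - eapply Rbar_le_lt_trans; [apply (HJ J (le_n _))|exact I].
Qed.

End DiagonalLimit.

Theorem proposition3p1 (Phi : nat -> list nat) (fs : nat -> nat -> C) :
  Folner Phi ->
  (forall j : nat, L2 Phi (fs j)) ->
  Cauchy_bes Phi fs ->
  exists (sigma : nat -> nat) (f : nat -> C),
    strict_incr sigma /\
    L2 (fun N => Phi (sigma N)) f /\
    (forall eps : R, 0 < eps -> exists J : nat, forall j : nat, (J <= j)%nat ->
       Rbar_le (besnorm (fun N => Phi (sigma N)) (fsub f (fs j))) eps) /\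
    (forall a b : R,
       (forall j n : nat, in_interval a b (fs j n)) ->
       forall n : nat, in_interval a b (f n)).
Proof.
  intros HF HL2 HC.
  assert (HNoDup : forall N, NoDup (Phi N)) by (intros N; apply (proj1 HF N)).
  destruct (strict_incr_choice (admissible Phi fs)
              (admissible_eventually Phi fs (Folner_length_unbounded Phi HF)))
    as [sigma [Hincr Hadm]].
  exists sigma, (diagonal_limit Phi fs sigma).
  split; [exact Hincr|]. split; [|split].
  - exact (diagonal_limit_L2 Phi fs HNoDup sigma Hadm Hincr HL2 HC).
  - exact (diagonal_limit_converges Phi fs HNoDup sigma Hadm HC).
  - intros a b Hab n. apply Hab.
Qed.
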